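(* Assume $l=-\infty$, $r=\infty$, and that there exists $y_0\in I$ with $G_{y_0}(a)<\infty$ for all $a>0$. Then for every $y\in I$, $G_y$ is a bijection from $[0,\infty)$ onto $[0,\infty)$.
   Context: Let $-\infty\le l<r\le\infty$, $I=(l,r)$, $\eta\colon\mathbb R\to\mathbb R$ Borel with $\eta\ne0$ on $I$, $1/\eta^2\in L^1_{\mathrm{loc}}(I)$, $\eta=0$ off $I$. For $y\in I$, $x\in\mathbb R$, $q(y,x)=\int_y^x\int_y^u\frac{2}{\eta^2(z)}\,dz\,du\in[0,\infty]$. Let $\mu\ne\delta_0$ be a centered probability measure on $\mathbb R$ with finite first moment. For $y\in I$, $a\ge0$, $G_y(a)=\int_{\mathbb R} q(y,y+ax)\,\mu(dx)\in[0,\infty]$. *)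

From HB Require Import structures.
From mathcomp Require Import all_boot all_order all_algebra.
From mathcomp Require Import all_classical all_reals all_analysis.
Set Implicit Arguments. Unset Strict Implicit. Unset Printing Implicit Defensive.
Import Order.TTheory GRing.Theory Num.Theory.
Import numFieldNormedType.Exports.
Local Open Scope classical_set_scope.
Local Open Scope ring_scope.
Local Open Scope ereal_scope.

Definition ointegral (R : realType) (a b : R) (f : R -> \bar R) : \bar R :=
  if (a <= b)%R then \int[lebesgue_measure]_(u in `[a, b]) f u
  else - \int[lebesgue_measure]_(u in `[b, a]) f u.

Definition q (R : realType) (eta : R -> R) (y x : R) : \bar R :=
  ointegral y x (fun u => ointegral y u (fun z => (2 / (eta z ^+ 2))%:E)).

Definition G (R : realType) (eta : R -> R)
  (mu : probability (measurableTypeR R) R) (y a : R) : \bar R :=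
  \int[mu]_x q eta y (y + a * x)%R.

From HB Require Import structures.
From mathcomp Require Import all_boot all_order all_algebra.
From mathcomp Require Import all_classical all_reals all_analysis.
From mathcomp Require Import measurable_realfun.
From mathcomp Require Import lra ring.
Set Implicit Arguments.
Unset Strict Implicit.
Unset Printing Implicit Defensive.
Import Order.TTheory GRing.Theory Num.Theory.
Import numFieldNormedType.Exports.
Local Open Scope classical_set_scope.
Local Open Scope ring_scope.

(* Let phi be the primitive of 2/eta^2 and Phi the primitive of phi. Then
   q(y,x) = Phi x - Phi y - phi y (x - y) is the Bregman divergence of the
   strictly convex Phi, so a |-> G_y(a) = E[q(y, y + a X)] is convex, vanishes
   at 0 and is positive for a > 0 because mu <> delta_0. Finiteness passes
   from y0 to y through the convexity bound
     q(y,z) <= q(y0, 2y - y0)/2 + |phi y0 - phi y| |z - y| + q(y0, y0 + 2(z - y))/2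
   and the integrability of X. Finally, a finite convex function on [0, +oo)
   that vanishes only at 0 is strictly increasing, locally Lipschitz and at
   least linear (G(B) >= B G(1)), hence a bijection of [0, +oo). *)

Lemma integral_gt0 d (T : measurableType d) (R : realType)
    (m : {measure set T -> \bar R}) (D : set T) (g : T -> \bar R) :
  measurable D -> measurable_fun D g -> (forall x, D x -> (0 < g x)%E) ->
  m D != 0%E -> (0 < \int[m]_(x in D) g x)%E.
Proof.
move=> mD mg g_gt0 mD_neq0.
rewrite lt_neqAle integral_ge0 ?andbT; last by move=> x Dx; exact/ltW/g_gt0.
apply/negP => /eqP int_g0.
have int_abs_g0 : (\int[m]_(x in D) `|g x| = 0)%E.
  rewrite [RHS]int_g0; apply: eq_integral => x; rewrite inE => Dx.
  by rewrite gee0_abs // ltW // g_gt0.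
have [N [mN N0 DN]] := (ae_eq_integral_abs m mD mg).1 int_abs_g0.
move/eqP: mD_neq0; apply; apply/eqP; rewrite eq_le measure_ge0 andbT -N0.
apply: le_measure; rewrite ?inE // => x Dx; apply: DN => /= /(_ Dx) gx0.
by move: (g_gt0 x Dx); rewrite gx0 ltxx.
Qed.

Section primitive.
Variable R : realType.
Implicit Types (g : R -> R) (a b c : R).

Definition segment_integrable g := forall a b,
  lebesgue_measure.-integrable `[a, b]%classic (fun u => (g u)%:E).

(* [fine] returns the junk value 0 when the oriented integral is infinite;
   [prim] is only used for segment-integrable [g]. *)
Definition prim g (x : R) : R := fine (ointegral 0 x (fun u => (g u)%:E)).

Lemma integral_itv_split (f : R -> \bar R) a b c :
  a <= b -> b <= c -> measurable_fun `[a, c]%classic f ->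
  (\int[lebesgue_measure]_(x in `[a, c]) f x =
   \int[lebesgue_measure]_(x in `[a, b]) f x +
   \int[lebesgue_measure]_(x in `[b, c]) f x)%E.
Proof.
move=> ab bc mf.
have -> : `[a, c]%classic = `[a, b[%classic `|` `[b, c]%classic :> set R.
  by apply: itv_bndbnd_setU; rewrite bnd_simp.
rewrite integral_setU //.
- rewrite integral_itv_bndo_bndc //.
  by apply: measurable_funS mf => //; apply: subset_itvl; rewrite bnd_simp.
- by rewrite -itv_bndbnd_setU // bnd_simp.
- apply/disj_setPS => x [] /=; rewrite !in_itv /= => /andP[_ xb] /andP[bx _].
  by move: (lt_le_trans xb bx); rewrite ltxx.
Qed.

Lemma integral_itv_prim g : segment_integrable g -> forall a b, a <= b ->
  (\int[lebesgue_measure]_(u in `[a, b]) (g u)%:E = (prim g b - prim g a)%:E)%E.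
Proof.
move=> g_int.
pose j a b := fine (\int[lebesgue_measure]_(u in `[a, b]) (g u)%:E)%E.
have jE a b : (\int[lebesgue_measure]_(u in `[a, b]) (g u)%:E = (j a b)%:E)%E.
  by rewrite /j fineK //; apply: integrable_fin_num.
have jD a b c : a <= b -> b <= c -> j a c = j a b + j b c.
  move=> ab bc; apply: EFin_inj; rewrite EFinD -!jE.
  by apply: integral_itv_split => //; case/integrableP: (g_int a c).
have primE x : prim g x = if 0 <= x then j 0 x else - j x 0.
  by rewrite /prim /ointegral; case: ifP => // _; rewrite jE.
move=> a b ab; rewrite jE !primE; congr EFin.
case: (leP 0 a) => a0; first by rewrite (le_trans a0 ab) (jD 0 a b) //; lra.
case: (leP 0 b) => b0; first by rewrite (jD a 0 b) //; [lra | exact: ltW].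
by rewrite (jD a b 0) //; [lra | exact: ltW].
Qed.

Lemma ointegral_prim g : segment_integrable g -> forall a b,
  ointegral a b (fun u => (g u)%:E) = (prim g b - prim g a)%:E.
Proof.
move=> g_int a b; rewrite /ointegral; case: ifP => ab; first exact: integral_itv_prim.
rewrite integral_itv_prim //; last by rewrite ltW // ltNge ab.
by rewrite -EFinN opprB.
Qed.

Lemma integral_itv_cst a b c : a <= b ->
  (\int[lebesgue_measure]_(u in `[a, b]) c%:E = (c * (b - a))%:E)%E.
Proof.
move=> ab; rewrite integral_cst //= lebesgue_measure_itv /= lte_fin.
case: ltP => [_|ba]; first by rewrite -EFinB -EFinM.
have -> : b = a by apply/eqP; rewrite eq_le ab ba.
by rewrite subrr mulr0 mule0.
Qed.

Lemma nondecreasing_segment_integrable g :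
  {homo g : x y / x <= y} -> segment_integrable g.
Proof.
move=> g_nd a b.
have mg : measurable_fun `[a, b]%classic (fun u => (g u)%:E).
  by apply/measurable_EFinP; exact: nondecreasing_measurable.
apply/integrableP; split => //.
apply: (@le_lt_trans _ _
  (\int[lebesgue_measure]_(u in `[a, b]) (`|g a| + `|g b|)%:E)%E).
  apply: ge0_le_integral => //.
  - exact: measurableT_comp mg.
  - move=> x; rewrite /= in_itv /= => /andP[ax xb]; rewrite lee_fin ler_norml.
    have := g_nd _ _ ax; have := g_nd _ _ xb.
    have := ler_norm (g b); have := ler_norm (- g a); rewrite normrN.
    have := normr_ge0 (g a); have := normr_ge0 (g b); lra.
have [ab|ba] := leP a b; first by rewrite integral_itv_cst // ltry.
by rewrite set_itv_ge ?integral_set0 ?ltry // bnd_simp -ltNge.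
Qed.

Lemma prim_increment_bounds g a b : {homo g : x y / x <= y} -> a <= b ->
  (b - a) * g a <= prim g b - prim g a <= (b - a) * g b.
Proof.
move=> g_nd ab; have g_int := nondecreasing_segment_integrable g_nd.
have cst_int c : segment_integrable (fun=> c) by apply: nondecreasing_segment_integrable.
have ga_int := cst_int (g a) a b; have gb_int := cst_int (g b) a b.
have gab_int := g_int a b.
rewrite -!lee_fin -integral_itv_prim // mulrC -integral_itv_cst // mulrC.
rewrite -integral_itv_cst //; apply/andP; split; apply: le_integral => //.
  by move=> x; rewrite inE /= in_itv /= => /andP[ax _]; rewrite lee_fin g_nd.
by move=> x; rewrite inE /= in_itv /= => /andP[_ xb]; rewrite lee_fin g_nd.
Qed.

Lemma prim_subr_cst g c : segment_integrable g -> forall a b,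
  prim (fun u => g u - c) b - prim (fun u => g u - c) a =
  prim g b - prim g a - c * (b - a).
Proof.
move=> g_int.
have cst_int : segment_integrable (fun=> c) by apply: nondecreasing_segment_integrable.
have gc_int : segment_integrable (fun u => g u - c).
  by move=> a b; apply: eq_integrable (integrableB _ (g_int a b) (cst_int a b)).
suff sub_le s t : s <= t -> prim (fun u => g u - c) t - prim (fun u => g u - c) s =
    prim g t - prim g s - c * (t - s).
  move=> a b; have [ab|ba] := leP a b; first exact: sub_le.
  by have := sub_le b a (ltW ba); lra.
move=> st; apply: EFin_inj; rewrite -integral_itv_prim // EFinB -integral_itv_prim //.
under eq_integral do rewrite EFinB.
by rewrite (integralB_EFin (f2 := fun=> c)) ?integral_itv_cst.
Qed.

Lemma prim_convex g : {homo g : x y / x <= y} -> forall u v t, 0 <= t <= 1 ->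
  prim g (t * u + (1 - t) * v) <= t * prim g u + (1 - t) * prim g v.
Proof.
move=> g_nd.
suff convex_uv u v t : u <= v -> 0 <= t <= 1 ->
    prim g (t * u + (1 - t) * v) <= t * prim g u + (1 - t) * prim g v.
  move=> u v t /andP[t0 t1]; have [uv|vu] := leP u v; first by apply: convex_uv => //; lra.
  rewrite (_ : t * u + _ = (1 - t) * v + (1 - (1 - t)) * u); last by ring.
  rewrite (_ : t * prim g u + _ = (1 - t) * prim g v + (1 - (1 - t)) * prim g u).
    by apply: convex_uv (ltW vu) _; lra.
  by ring.
move=> uv /andP[t0 t1]; set w := t * u + (1 - t) * v.
have uw : u <= w by rewrite /w; nra.
have wv : w <= v by rewrite /w; nra.
have /andP[_ le_uw] := prim_increment_bounds g_nd uw.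
have /andP[le_wv _] := prim_increment_bounds g_nd wv.
rewrite (_ : w - u = (1 - t) * (v - u)) in le_uw; last by rewrite /w; ring.
rewrite (_ : v - w = t * (v - u)) in le_wv; last by rewrite /w; ring.
have t1' : 0 <= 1 - t by lra.
have := ler_wpM2l t0 le_uw; have := ler_wpM2l t1' le_wv; nra.
Qed.

End primitive.

Section bregman.
Variables (R : realType) (p : R -> R).
Implicit Types x y z : R.

Definition bregman y x := prim p x - prim p y - p y * (x - y).

Lemma bregman_xx y : bregman y y = 0.
Proof. by rewrite /bregman !subrr mulr0 subr0. Qed.

Lemma bregman_change_base y0 y z :
  bregman y z = bregman y0 z - bregman y0 y + (p y0 - p y) * (z - y).
Proof. by rewrite /bregman; ring. Qed.

Hypothesis p_nd : {homo p : x y / x <= y}.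

Lemma bregman_ge0 y x : 0 <= bregman y x.
Proof.
rewrite /bregman subr_ge0; have [yx|xy] := leP y x.
  by have /andP[+ _] := prim_increment_bounds p_nd yx; lra.
by have /andP[_ +] := prim_increment_bounds p_nd (ltW xy); lra.
Qed.

Lemma bregman_nondecreasing_ge y x1 x2 :
  y <= x1 -> x1 <= x2 -> bregman y x1 <= bregman y x2.
Proof.
move=> yx1 x12; have /andP[+ _] := prim_increment_bounds p_nd x12.
have x12' : 0 <= x2 - x1 by rewrite subr_ge0.
by have := ler_wpM2l x12' (p_nd yx1); rewrite /bregman; nra.
Qed.

Lemma bregman_nonincreasing_le y x1 x2 :
  x2 <= y -> x1 <= x2 -> bregman y x2 <= bregman y x1.
Proof.
move=> x2y x12; have /andP[_ +] := prim_increment_bounds p_nd x12.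
have x12' : 0 <= x2 - x1 by rewrite subr_ge0.
by have := ler_wpM2l x12' (p_nd x2y); rewrite /bregman; nra.
Qed.

Lemma bregman_convex y u v t : 0 <= t <= 1 ->
  bregman y (t * u + (1 - t) * v) <= t * bregman y u + (1 - t) * bregman y v.
Proof.
move=> t01; have := prim_convex p_nd u v t01; rewrite /bregman.
have -> : t * (prim p u - prim p y - p y * (u - y)) +
    (1 - t) * (prim p v - prim p y - p y * (v - y)) =
    t * prim p u + (1 - t) * prim p v - prim p y - p y * (t * u + (1 - t) * v - y).
  by ring.
lra.
Qed.

End bregman.

Lemma bregman_gt0 (R : realType) (p : R -> R) (y x : R) :
  {homo p : x y / x < y} -> x != y -> 0 < bregman p y x.
Proof.
move=> p_incr; have p_nd := ltW_homo p_incr.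
rewrite /bregman neq_lt; set m := (x + y) / 2.
case/orP=> lt_xy.
- have xm : x < m by rewrite /m; lra.
  have my : m < y by rewrite /m; lra.
  have /andP[_ le_xm] := prim_increment_bounds p_nd (ltW xm).
  have /andP[_ le_my] := prim_increment_bounds p_nd (ltW my).
  have : (m - x) * p m < (m - x) * p y by rewrite ltr_pM2l ?subr_gt0 // p_incr.
  lra.
- have ym : y < m by rewrite /m; lra.
  have mx : m < x by rewrite /m; lra.
  have /andP[le_ym _] := prim_increment_bounds p_nd (ltW ym).
  have /andP[le_mx _] := prim_increment_bounds p_nd (ltW mx).
  have : (x - m) * p y < (x - m) * p m by rewrite ltr_pM2l ?subr_gt0 // p_incr.
  lra.
Qed.

Section speed_primitive.
Variables (R : realType) (eta : R -> R).
Hypotheses (eta_neq0 : forall z, eta z != 0)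
  (eta_int : forall a b : R, lebesgue_measure.-integrable `[a, b]
    (fun z => ((eta z ^+ 2)^-1)%:E)).

Definition speed_prim := prim (fun z => 2 / eta z ^+ 2).

Lemma speed_density_segment_integrable :
  segment_integrable (fun z => 2 / eta z ^+ 2).
Proof.
by move=> a b; apply: eq_integrable (integrableZl _ 2 (eta_int a b)).
Qed.

Lemma speed_prim_increasing : {homo speed_prim : x y / x < y}.
Proof.
move=> a b ab; rewrite -subr_gt0 -lte_fin.
rewrite -(integral_itv_prim speed_density_segment_integrable (ltW ab)).
apply: integral_gt0 => //.
- by case/integrableP: (speed_density_segment_integrable a b).
- by move=> z _; rewrite lte_fin divr_gt0 // exprn_even_gt0 ?eta_neq0.
- have := lebesgue_measure_itv `[a, b]; rewrite /= lte_fin ab => ->.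
  by rewrite -EFinD eqe subr_eq0 gt_eqF.
Qed.

Lemma q_bregman y x : q eta y x = (bregman speed_prim y x)%:E.
Proof.
have hf := speed_density_segment_integrable.
have p_nd := ltW_homo speed_prim_increasing.
have shift_nd : {homo (fun u => speed_prim u - speed_prim y) : a b / a <= b}.
  by move=> a b ab; rewrite lerD2r p_nd.
rewrite /q (eq_fun (fun u => ointegral_prim hf y u)).
rewrite (ointegral_prim (nondecreasing_segment_integrable shift_nd)).
by rewrite prim_subr_cst //; exact: nondecreasing_segment_integrable.
Qed.

End speed_primitive.

Lemma bregman_le_change_base (R : realType) (p : R -> R) (y0 y z : R) :
  {homo p : x y / x <= y} ->
  bregman p y z <= bregman p y0 (y0 + 2 * (y - y0)) / 2 +
    `|p y0 - p y| * `|z - y| + bregman p y0 (y0 + 2 * (z - y)) / 2.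
Proof.
move=> p_nd; rewrite (bregman_change_base _ y0).
have := bregman_ge0 p_nd y0 y; have := ler_norm ((p y0 - p y) * (z - y)).
have : bregman p y0 z <= 2^-1 * bregman p y0 (y0 + 2 * (y - y0)) +
    (1 - 2^-1) * bregman p y0 (y0 + 2 * (z - y)).
  rewrite -[X in bregman p y0 X <= _](_ : 2^-1 * (y0 + 2 * (y - y0)) +
    (1 - 2^-1) * (y0 + 2 * (z - y)) = z); last by field.
  apply: bregman_convex => //.
  by rewrite invr_ge0 ler0n /= invf_le1 ?ler1n.
rewrite normrM (_ : 1 - 2^-1 = 2^-1 :> R); last by field.
lra.
Qed.

Section bregman_mean.
Variables (R : realType) (p : R -> R) (mu : probability (measurableTypeR R) R).
Hypothesis p_nd : {homo p : x y / x <= y}.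

Definition bregman_mean y a := (\int[mu]_x (bregman p y (y + a * x))%:E)%E.

Lemma measurable_bregman_dilation y a : 0 <= a ->
  measurable_fun setT (fun x : R => (bregman p y (y + a * x))%:E).
Proof.
move=> a0; apply/measurable_EFinP.
have -> : (fun x => bregman p y (y + a * x)) =
    (fun x => bregman p y (Num.max (y + a * x) y)) \+
    (fun x => bregman p y (Num.min (y + a * x) y)).
  apply: funext => x /=.
  by have [_|_] := leP (y + a * x) y; rewrite bregman_xx ?add0r ?addr0.
have dilate_nd : {homo (fun x => y + a * x) : u v / u <= v}.
  by move=> u v uv; rewrite lerD2l ler_wpM2l.
apply: measurable_funD.
  apply: nondecreasing_measurable => // u v uv.
  apply: bregman_nondecreasing_ge => //; first by rewrite le_max lexx orbT.
  by apply: le_max2 => //; exact: dilate_nd.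
apply: nonincreasing_measurable => // u v uv.
apply: bregman_nonincreasing_le => //; first by rewrite ge_min lexx orbT.
by apply: le_min2 => //; exact: dilate_nd.
Qed.

Lemma bregman_mean_ge0 y a : (0 <= bregman_mean y a)%E.
Proof. by apply: integral_ge0 => x _; rewrite lee_fin bregman_ge0. Qed.

Lemma bregman_mean0 y : bregman_mean y 0 = 0%E.
Proof.
rewrite /bregman_mean; under eq_integral do rewrite mul0r addr0 bregman_xx.
by rewrite integral0.
Qed.

Lemma bregman_mean_convex y a b t : 0 <= a -> 0 <= b -> 0 <= t <= 1 ->
  (bregman_mean y (t * a + (1 - t) * b) <=
   t%:E * bregman_mean y a + (1 - t)%:E * bregman_mean y b)%E.
Proof.
move=> a0 b0 /andP[t0 t1]; have t1' : 0 <= 1 - t by lra.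
have breg_ge0 c x : (0 <= (bregman p y (y + c * x))%:E)%E.
  by rewrite lee_fin bregman_ge0.
have ma := measurable_bregman_dilation y a0.
have mb := measurable_bregman_dilation y b0.
rewrite /bregman_mean -ge0_integralZl_EFin // -(ge0_integralZl_EFin _ _ _ _ t1') //.
rewrite -ge0_integralD //; last 4 first.
- by move=> x _; rewrite mule_ge0.
- exact: emeasurable_funM.
- by move=> x _; rewrite mule_ge0.
- exact: emeasurable_funM.
apply: ge0_le_integral => //.
- by apply: measurable_bregman_dilation; rewrite addr_ge0 // mulr_ge0.
- by apply: emeasurable_funD; exact: emeasurable_funM.
- move=> x _; rewrite -!EFinM -EFinD lee_fin.
  rewrite (_ : y + _ * x = t * (y + a * x) + (1 - t) * (y + b * x)); last by ring.
  by apply: bregman_convex => //; rewrite t0 t1.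
Qed.

Lemma bregman_mean_ltyP y a : 0 <= a ->
  reflect (mu.-integrable setT (fun x => (bregman p y (y + a * x))%:E))
          (bregman_mean y a < +oo)%E.
Proof.
move=> a0; apply: (iffP idP); last exact: integrable_lty.
move=> fin; apply/integrableP; split; first exact: measurable_bregman_dilation.
suff -> : (\int[mu]_x `|(bregman p y (y + a * x))%:E| = bregman_mean y a)%E by [].
by apply: eq_integral => x _; rewrite gee0_abs // lee_fin bregman_ge0.
Qed.

Hypothesis mu_int : mu.-integrable setT (fun x => x%:E).

Lemma bregman_mean_lty (y0 y a : R) :
  (forall b, 0 < b -> (bregman_mean y0 b < +oo)%E) ->
  0 <= a -> (bregman_mean y a < +oo)%E.
Proof.
move=> fin0; rewrite le_eqVlt => /orP[/eqP<-|a0]; first by rewrite bregman_mean0 ltry.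
apply/bregman_mean_ltyP; first exact: ltW.
have int0 : mu.-integrable setT (fun x => (bregman p y0 (y0 + 2 * a * x))%:E).
  by apply/bregman_mean_ltyP; [rewrite mulr_ge0 // ltW | apply: fin0; rewrite mulr_gt0].
set K := bregman p y0 (y0 + 2 * (y - y0)) / 2.
set L := `|p y0 - p y| * a.
have int_bound : mu.-integrable setT
    (fun x => (K + (L * `|x| + 2^-1 * bregman p y0 (y0 + 2 * a * x)))%:E).
  by apply: eq_integrable (integrableD _ (finite_measure_integrable_cst mu K _)
    (integrableD _ (integrableZl _ L (integrable_abse mu_int))
                   (integrableZl _ 2^-1 int0))).
apply: le_integrable int_bound => //; first exact: measurable_bregman_dilation (ltW a0).
move=> x _; have bound_ge0 :
    0 <= K + (L * `|x| + 2^-1 * bregman p y0 (y0 + 2 * a * x)).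
  by rewrite !addr_ge0 ?mulr_ge0 ?divr_ge0 ?invr_ge0 ?bregman_ge0 // ltW.
rewrite !gee0_abs ?lee_fin ?bregman_ge0 //.
have := bregman_le_change_base y0 y (y + a * x) p_nd.
rewrite (_ : y + a * x - y = a * x); last by ring.
rewrite (_ : y0 + 2 * (a * x) = y0 + 2 * a * x); last by ring.
by rewrite normrM (gtr0_norm a0) /L /K mulrA; lra.
Qed.

End bregman_mean.

Lemma probability_setC1_neq0 (R : realType) (mu : probability (measurableTypeR R) R)
    (c : R) :
  (exists A : set R, measurable A /\ mu A <> \d_c A) -> mu (~` [set c]) != 0%E.
Proof.
move=> [A [mA muA]]; apply: contra_notN muA => /eqP muC1.
have null B : measurable B -> B `<=` ~` [set c] -> mu B = 0%E.
  move=> mB BC1; apply/eqP; rewrite eq_le measure_ge0 andbT -muC1.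
  by apply: le_measure; rewrite ?inE //; exact: measurableC.
rewrite diracE; have [cA|cA] := boolP (c \in A).
  have muCA : mu (~` A) = 0%E.
    by apply: null; [exact: measurableC | move=> x /= nAx xc; apply: nAx; rewrite xc -inE].
  have := probability_setC mu mA; rewrite muCA.
  have : mu A \is a fin_num by rewrite fin_num_measure.
  by case: (mu A) => //= r _ /eqP; rewrite -EFinB eqe => /eqP r1; congr EFin; lra.
by rewrite null // => x Ax /= xc; move/negP: cA; apply; rewrite -xc inE.
Qed.

Lemma bregman_mean_gt0 (R : realType) (p : R -> R)
    (mu : probability (measurableTypeR R) R) (y a : R) :
  {homo p : x y / x < y} -> (exists A : set R, measurable A /\ mu A <> \d_(0 : R) A) ->
  0 < a -> (0 < bregman_mean p mu y a)%E.
Proof.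
move=> p_incr mu_neq_dirac a0; have p_nd := ltW_homo p_incr.
have mC0 : measurable (~` [set (0 : R)] : set (measurableTypeR R)).
  exact: measurableC.
have mbreg := measurable_bregman_dilation p_nd y (ltW a0).
have int_C0_gt0 : (0 < \int[mu]_(x in ~` [set 0%R]) (bregman p y (y + a * x))%:E)%E.
  apply: integral_gt0 => //; first exact: measurable_funS mbreg.
    move=> x /= /eqP x0; rewrite lte_fin bregman_gt0 //.
    by rewrite -subr_eq0 addrC addKr mulf_neq0 // gt_eqF.
  exact: probability_setC1_neq0.
apply: (lt_le_trans int_C0_gt0).
by apply: ge0_subset_integral => // x _; rewrite lee_fin bregman_ge0.
Qed.

Section convex_on_nonneg.
Variables (R : realType) (g : R -> R).
Hypotheses (g0 : g 0 = 0) (g_gt0 : forall a, 0 < a -> 0 < g a)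
  (g_convex : forall a b t, 0 <= a -> 0 <= b -> 0 <= t <= 1 ->
     g (t * a + (1 - t) * b) <= t * g a + (1 - t) * g b).

Lemma convex_ge0 a : 0 <= a -> 0 <= g a.
Proof. by rewrite le_eqVlt => /orP[/eqP<-|/g_gt0/ltW]; rewrite ?g0. Qed.

Lemma convex_le_scale a t : 0 <= a -> 0 <= t <= 1 -> g (t * a) <= t * g a.
Proof.
move=> a0 t01; have := g_convex a0 (lexx 0) t01.
by rewrite !mulr0 !addr0 g0 mulr0 addr0.
Qed.

Lemma convex_increasing a b : 0 <= a -> a < b -> g a < g b.
Proof.
move=> a0 ab; have b0 : 0 < b by exact: le_lt_trans ab.
have t01 : 0 <= a / b <= 1 by rewrite divr_ge0 ?(ltW b0) //= ler_pdivrMr // mul1r ltW.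
rewrite -[in g a](divfK (lt0r_neq0 b0) a); apply: le_lt_trans (convex_le_scale (ltW b0) t01) _.
by rewrite gtr_pMl ?g_gt0 // ltr_pdivrMr ?mul1r.
Qed.

Lemma convex_ge_linear B : 1 <= B -> B * g 1 <= g B.
Proof.
move=> B1; have B0 : 0 < B by exact: lt_le_trans ltr01 B1.
have t01 : 0 <= B^-1 <= 1 by rewrite invr_ge0 ltW //= invf_le1.
have := convex_le_scale (ltW B0) t01; rewrite mulVf ?lt0r_neq0 // => le_g1.
by rewrite -ler_pdivlMl // mulrC.
Qed.

Lemma convex_increment_le s u B : 0 <= s -> s <= u -> u <= B ->
  g u - g s <= (u - s) * g (B + 1).
Proof.
move=> s0 su uB; set c := B + 1.
have cu : 1 <= c - u by rewrite /c; lra.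
have cs0 : 0 < c - s by lra.
have cs_neq0 := lt0r_neq0 cs0.
set l := (c - u) / (c - s).
have l01 : 0 <= l <= 1.
  by rewrite divr_ge0 /= ?ler_pdivrMr ?mul1r //; lra.
have c0 : 0 <= c by lra.
have := g_convex s0 c0 l01.
have -> : l * s + (1 - l) * c = u by rewrite /l; field.
have -> : 1 - l = (u - s) / (c - s) by rewrite /l; field.
have k1 : (u - s) / (c - s) <= u - s by rewrite ler_pdivrMr // ler_peMr //; lra.
have := convex_ge0 s0; have : 0 <= g c by apply: convex_ge0; lra.
have : 0 <= (u - s) / (c - s) by rewrite divr_ge0 //; lra.
have : l = 1 - (u - s) / (c - s) by rewrite /l; field.
nra.
Qed.

(* The IVT needs continuity on [0, B]; composing with the clamp turns the
   Lipschitz bound of [convex_increment_le] into global continuity. *)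
Definition clamp (B u : R) : R := if u < 0 then 0 else if B < u then B else u.

Lemma clamp_itv B u : 0 <= B -> 0 <= clamp B u <= B.
Proof. by move=> B0; rewrite /clamp; do 2 (case: ltP => ?) => /=; lra. Qed.

Lemma clamp_id B u : 0 <= u <= B -> clamp B u = u.
Proof.
move=> /andP[u0 uB]; rewrite /clamp.
by case: ltP => [?|_]; [lra | case: ltP => // ?; lra].
Qed.

Lemma clamp_le B u w : 0 <= B -> u <= w ->
  clamp B u <= clamp B w /\ clamp B w - clamp B u <= w - u.
Proof. by move=> B0 uw; rewrite /clamp; do 4 (case: ltP => ?); split; lra. Qed.

Lemma convex_clamp_lipschitz B u w : 0 <= B ->
  `|g (clamp B u) - g (clamp B w)| <= g (B + 1) * `|u - w|.
Proof.
move=> B0; wlog uw : u w / u <= w.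
  move=> lip; have [uw|wu] := leP u w; first exact: lip.
  by rewrite distrC [X in _ * X]distrC lip // ltW.
have [cuw dist_cuw] := clamp_le B0 uw.
have /andP[cu0 _] := clamp_itv u B0; have /andP[_ cwB] := clamp_itv w B0.
have g_le : g (clamp B u) <= g (clamp B w).
  by move: cuw; rewrite le_eqVlt => /orP[/eqP->//|/(convex_increasing cu0)/ltW].
have := convex_increment_le cu0 cuw cwB; have : 0 <= g (B + 1) by apply: convex_ge0; lra.
rewrite distrC ger0_norm ?subr_ge0 // distrC ger0_norm ?subr_ge0 //.
nra.
Qed.

Lemma continuous_convex_clamp B : 0 <= B -> continuous (fun u => g (clamp B u)).
Proof.
move=> B0 x; apply/cvgrPdist_lt => e e0.
have L0 : 0 <= g (B + 1) by apply: convex_ge0; lra.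
set L := g (B + 1) in L0 *; have L1 : 0 < L + 1 by lra.
have Le_lt : L * (e / (L + 1)) < e by rewrite mulrA ltr_pdivrMr //; nra.
near=> z; apply: le_lt_trans (convex_clamp_lipschitz x z B0) _.
near: z; exists (e / (L + 1)); first by rewrite /= divr_gt0.
move=> z /= xz; apply: le_lt_trans Le_lt.
by apply: ler_wpM2l => //; exact: ltW.
Unshelve. all: by end_near.
Qed.

Lemma convex_surjective v : 0 <= v -> exists2 a, 0 <= a & g a = v.
Proof.
move=> v0; set B := Num.max 1 (v / g 1).
have B1 : 1 <= B by rewrite le_max lexx.
have B0 : 0 <= B by exact: le_trans ler01 B1.
have v_le_gB : v <= g B.
  apply: le_trans (convex_ge_linear B1).
  by rewrite -ler_pdivrMr ?g_gt0 // le_max lexx orbT.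
have itv_v : Num.min (g (clamp B 0)) (g (clamp B B)) <= v <=
             Num.max (g (clamp B 0)) (g (clamp B B)).
  rewrite !clamp_id ?lexx ?B0 // g0 (min_idPl (convex_ge0 B0)).
  by rewrite (max_idPr (convex_ge0 B0)) v0.
have [a] := IVT B0 (continuous_subspaceT (continuous_convex_clamp B0)) itv_v.
by rewrite in_itv /= => a0B; rewrite clamp_id // => <-; exists a; case/andP: a0B.
Qed.

Lemma convex_exists_unique v : 0 <= v -> exists! a, 0 <= a /\ g a = v.
Proof.
move=> v0; have [a a0 gav] := convex_surjective v0.
exists a; split => // a' [a'0 ga'v].
have [lt_aa'|lt_a'a|//] := ltgtP a a'.
  by have := convex_increasing a0 lt_aa'; rewrite gav ga'v ltxx.
by have := convex_increasing a'0 lt_a'a; rewrite gav ga'v ltxx.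
Qed.

End convex_on_nonneg.

Theorem mainTheorem3 (R : realType) (eta : R -> R)
  (mu : probability (measurableTypeR R) R) :
  measurable_fun setT eta ->
  (forall z : R, eta z != 0) ->
  (forall a b : R, lebesgue_measure.-integrable `[a, b]
                     (fun z => ((eta z ^+ 2)^-1)%:E)) ->
  mu.-integrable setT (fun x => x%:E) ->
  (\int[mu]_x x%:E = 0)%E ->
  (exists A : set R, measurable A /\ mu A <> \d_(0 : R) A) ->
  (exists y0 : R, forall a : R, 0 < a -> (G eta mu y0 a < +oo)%E) ->
  forall y : R,
    (forall a : R, 0 <= a -> exists b : R, 0 <= b /\ G eta mu y a = b%:E) /\
    (forall b : R, 0 <= b -> exists! a : R, 0 <= a /\ G eta mu y a = b%:E).
Proof.
move=> _ eta_neq0 eta_int mu_int _ mu_neq_dirac [y0 G_y0_lty] y.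
have p_nd := ltW_homo (speed_prim_increasing eta_neq0 eta_int).
have GE y' : G eta mu y' = bregman_mean (speed_prim eta) mu y'.
  by apply/funext => a; apply: eq_integral => x _; rewrite (q_bregman eta_neq0 eta_int).
rewrite GE in G_y0_lty; rewrite GE; set Gb := bregman_mean _ _ y.
pose Gr a := fine (Gb a).
have GrE a : 0 <= a -> Gb a = (Gr a)%:E.
  move=> a0; rewrite /Gr fineK // ge0_fin_numE ?bregman_mean_ge0 //.
  exact (bregman_mean_lty p_nd mu_int y G_y0_lty a0).
have Gr_convex a b t : 0 <= a -> 0 <= b -> 0 <= t <= 1 ->
    Gr (t * a + (1 - t) * b) <= t * Gr a + (1 - t) * Gr b.
  move=> a0 b0 /[dup] t01 /andP[t0 t1].
  rewrite -lee_fin EFinD !EFinM -!GrE ?addr_ge0 ?mulr_ge0 ?subr_ge0 //.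
  exact: bregman_mean_convex.
have Gr_gt0 a : 0 < a -> 0 < Gr a.
  move=> a0; rewrite -lte_fin -GrE ?ltW //.
  exact: bregman_mean_gt0 (speed_prim_increasing eta_neq0 eta_int) mu_neq_dirac a0.
have Gr0 : Gr 0 = 0 by rewrite /Gr /Gb bregman_mean0.
split=> [a a0 | b b0]; first by exists (Gr a); rewrite GrE // fine_ge0 ?bregman_mean_ge0.
have [a [[a0 Gra] Gr_uniq]] := convex_exists_unique Gr0 Gr_gt0 Gr_convex b0.
exists a; split=> [|a' [a'0]]; first by rewrite GrE ?Gra.
by rewrite GrE // => -[Gra']; exact: Gr_uniq.
Qed.
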